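(* Let $k$ be a field, $V$ a $k$-vector space and $\varphi,\psi\in\mathrm{End}_k(V)$ finite potent endomorphisms such that $\varphi\psi-\psi\varphi$ has finite rank. Then $\langle\varphi,\psi\rangle:=\varphi\,k[\varphi,\psi]+\psi\,k[\varphi,\psi]$ is a finite potent subspace of $\mathrm{End}_k(V)$.
   Context: An endomorphism $\varphi$ of $V$ is finite potent if $\varphi^nV$ is finite dimensional for some $n$. $k[\varphi,\psi]$ denotes the $k$-subalgebra of $\mathrm{End}_k(V)$ generated by $\varphi$ and $\psi$. A subspace $F\subseteq\mathrm{End}_k(V)$ is finite potent if there is $n$ such that for any $\varphi_1,\dots,\varphi_n\in F$ the space $\varphi_1\cdots\varphi_nV$ is finite dimensional. *)

From HB Require Import structures.
From mathcomp Require Import all_boot all_order all_algebra.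
Set Implicit Arguments. Unset Strict Implicit. Unset Printing Implicit Defensive.
Import GRing.Theory.
Local Open Scope ring_scope.

Section Defs.
Variables (k : fieldType) (V : lmodType k).

(* For a subspace (e.g. an image of a
   linear map) this is exactly "S is finite dimensional". *)
Definition fin_dim (S : V -> Prop) : Prop :=
  exists s : seq V, forall x, S x ->
    exists c : 'I_(size s) -> k, x = \sum_(i < size s) c i *: s`_i.

Definition image_of (f : V -> V) : V -> Prop := fun x => exists v, x = f v.

Definition finite_rank (f : V -> V) : Prop := fin_dim (image_of f).

Definition finite_potent (f : V -> V) : Prop :=
  exists n : nat, fin_dim (image_of (iter n f)).

Inductive in_kalg (phi psi : V -> V) : (V -> V) -> Prop :=
  | kalg_id : in_kalg phi psi id
  | kalg_phi : in_kalg phi psi phi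
  | kalg_psi : in_kalg phi psi psi
  | kalg_add f g : in_kalg phi psi f -> in_kalg phi psi g ->
      in_kalg phi psi (fun x => f x + g x)
  | kalg_scale (a : k) f : in_kalg phi psi f ->
      in_kalg phi psi (fun x => a *: f x)
  | kalg_comp f g : in_kalg phi psi f -> in_kalg phi psi g ->
      in_kalg phi psi (f \o g).

Definition gen_space (phi psi : V -> V) : (V -> V) -> Prop :=
  fun f => exists a b, in_kalg phi psi a /\ in_kalg phi psi b /\
    f = (fun x => phi (a x) + psi (b x)).

Definition finite_potent_space (F : (V -> V) -> Prop) : Prop :=
  exists n : nat, forall fs : seq (V -> V), size fs = n ->
    (forall i, (i < size fs)%N -> F (nth id fs i)) ->
    fin_dim (image_of (foldr (fun f g => f \o g) id fs)).

End Defs.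

(* Modulo finite-rank endomorphisms k[phi,psi] is commutative: the linear maps
   commuting with a given linear map modulo finite rank form a subalgebra, and
   phi, psi commute modulo finite rank.  Let I(p,q) be phi^p End(V) + psi^q End(V)
   + {finite-rank maps}.  Composing on the left with phi a, for a in k[phi,psi],
   maps I(p,q) into I(p+1,q), and symmetrically for psi b; hence every element of
   <phi,psi> maps I(p,q+1) and I(p+1,q) into I(p+1,q+1), and a product of N
   elements of <phi,psi> lies in I(p,q) whenever p + q <= N + 1.  For n, m with
   phi^n V and psi^m V finite dimensional, products of n + m factors thus lie in
   I(n,m), all of whose members have finite rank. *)

From HB Require Import structures.
From mathcomp Require Import all_boot all_order all_algebra.
Import GRing.Theory.
Local Open Scope ring_scope.
Set Implicit Arguments. Unset Strict Implicit. Unset Printing Implicit Defensive.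

Section FiniteRank.
Variables (k : fieldType) (V : lmodType k).
Implicit Types (s t : seq V) (x y : V) (f g h : V -> V).

(* Coefficients indexed by nat rather than by 'I_(size s), as in [fin_dim],
   so that spans of concatenations need no casts. *)
Definition in_span s x := exists c : nat -> k, x = \sum_(i < size s) c i *: s`_i.

Lemma fin_dimP (S : V -> Prop) :
  fin_dim S <-> exists s, forall x, S x -> in_span s x.
Proof.
split=> -[s Hs]; exists s => x /Hs [c ->].
  by exists (fun i => oapp c 0 (insub i)); apply: eq_bigr => i _; rewrite valK.
by exists (fun i => c i).
Qed.

Lemma finite_rankP f : finite_rank f <-> exists s, forall v, in_span s (f v).
Proof.
split=> [/fin_dimP [s Hs]|[s Hs]]; last by apply/fin_dimP; exists s => _ [v ->].
by exists s => v; apply: Hs; exists v.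
Qed.

Lemma in_span_cat s t x y : in_span s x -> in_span t y -> in_span (s ++ t) (x + y).
Proof.
case=> c ->; case=> d ->.
exists (fun i => if i < size s then c i else d (i - size s))%N.
rewrite size_cat big_split_ord /=; congr (_ + _); apply: eq_bigr => i _.
  by rewrite /= ltn_ord nth_cat ltn_ord.
by rewrite /= ltnNge leq_addr /= addKn nth_cat ltnNge leq_addr /= addKn.
Qed.

Lemma finite_rank_ext f g : finite_rank f -> f =1 g -> finite_rank g.
Proof.
by move=> /finite_rankP [s Hs] fg; apply/finite_rankP; exists s => v; rewrite -fg.
Qed.

Lemma finite_rank0 : finite_rank (fun _ : V => 0 : V).
Proof.
by apply/finite_rankP; exists [::] => v; exists (fun=> 0); rewrite big_ord0.
Qed.

Lemma finite_rankD f g : finite_rank f -> finite_rank g -> finite_rank (f \+ g).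
Proof.
move=> /finite_rankP [s Hs] /finite_rankP [t Ht]; apply/finite_rankP.
by exists (s ++ t) => v; apply: in_span_cat.
Qed.

Lemma finite_rankZ a f : finite_rank f -> finite_rank (a \*: f).
Proof.
move=> /finite_rankP [s Hs]; apply/finite_rankP; exists s => v.
have [c fv] := Hs v; exists (fun i => a * c i).
by rewrite /= fv scaler_sumr; apply: eq_bigr => i _; rewrite scalerA.
Qed.

Lemma finite_rank_compr f g : finite_rank f -> finite_rank (f \o g).
Proof.
by move=> /finite_rankP [s Hs]; apply/finite_rankP; exists s => v; apply: Hs.
Qed.

Definition fr_equiv f g := finite_rank (f \- g).

Definition fr_commute f g := fr_equiv (f \o g) (g \o f).

Lemma fr_equiv_ext f f' g g' : fr_equiv f g -> f =1 f' -> g =1 g' -> fr_equiv f' g'.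
Proof.
by move=> fg ff' gg'; apply: finite_rank_ext fg _ => x /=; rewrite ff' gg'.
Qed.

Lemma fr_equiv_refl f : fr_equiv f f.
Proof. by apply: finite_rank_ext finite_rank0 _ => x; rewrite /= subrr. Qed.

Lemma fr_equiv_sym f g : fr_equiv f g -> fr_equiv g f.
Proof.
by move/(finite_rankZ (-1))/finite_rank_ext; apply=> x; rewrite /= scaleN1r opprB.
Qed.

Lemma fr_equiv_trans g f h : fr_equiv f g -> fr_equiv g h -> fr_equiv f h.
Proof.
move=> fg gh; apply: finite_rank_ext (finite_rankD fg gh) _ => x.
by rewrite /= addrA subrK.
Qed.

Lemma fr_equivD f f' g g' :
  fr_equiv f f' -> fr_equiv g g' -> fr_equiv (f \+ g) (f' \+ g').
Proof.
move=> ff' gg'; apply: finite_rank_ext (finite_rankD ff' gg') _ => x.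
by rewrite /= opprD addrACA.
Qed.

Lemma fr_equivZ a f g : fr_equiv f g -> fr_equiv (a \*: f) (a \*: g).
Proof. by move/(finite_rankZ a)/finite_rank_ext; apply=> x; rewrite /= scalerBr. Qed.

Lemma fr_equiv_compr f g h : fr_equiv f g -> fr_equiv (f \o h) (g \o h).
Proof. exact: finite_rank_compr. Qed.

Lemma fr_commute_sym f g : fr_commute f g -> fr_commute g f.
Proof. exact: fr_equiv_sym. Qed.

Section LinearComposition.
Variable L : V -> V.
Hypothesis L_linear : linear L.
HB.instance Definition _ := GRing.isLinear.Build k V V *:%R L L_linear.

Lemma in_span_map s x : in_span s x -> in_span (map L s) (L x).
Proof.
case=> c ->; exists c; rewrite linear_sum size_map.
by apply: eq_bigr => i _; rewrite linearZ (nth_map 0).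
Qed.

Lemma finite_rank_compl f : finite_rank f -> finite_rank (L \o f).
Proof.
move=> /finite_rankP [s Hs]; apply/finite_rankP.
by exists (map L s) => v; apply: in_span_map.
Qed.

Lemma fr_equiv_compl f g : fr_equiv f g -> fr_equiv (L \o f) (L \o g).
Proof. by move/finite_rank_compl/finite_rank_ext; apply=> x; rewrite /= linearB. Qed.

End LinearComposition.

End FiniteRank.

Section IteratedLinearMap.
Variables (k : fieldType) (V : lmodType k).

Lemma iter_is_linear n (f : {linear V -> V}) : linear (iter n f).
Proof. by elim: n => [|n IHn] a x y //=; rewrite IHn linearP. Qed.

HB.instance Definition _ n (f : {linear V -> V}) :=
  GRing.isLinear.Build k V V *:%R (iter n f) (iter_is_linear n f).

End IteratedLinearMap.

Section GeneratedAlgebra.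
Variables (k : fieldType) (V : lmodType k) (phi psi : {linear V -> V}).
Implicit Types (f g h a b : V -> V).

Local Notation kalg := (in_kalg phi psi).

Lemma kalg_linear f : kalg f -> linear f.
Proof.
elim=> {f} [||| f g _ fL _ gL | c f _ fL | f g _ fL _ gL] a x y //=.
- exact: linearP.
- exact: linearP.
- by rewrite fL gL scalerDr addrACA.
- by rewrite fL scalerDr !scalerA mulrC.
- by rewrite gL fL.
Qed.

Lemma kalg_iter n f : kalg f -> kalg (iter n f).
Proof.
by move=> kf; elim: n => [|n IHn]; [exact: kalg_id | exact: kalg_comp kf IHn].
Qed.

Definition in_ideal p q h := exists X Y F, finite_rank F /\
  h =1 (iter p phi \o X) \+ (iter q psi \o Y) \+ F.

Lemma in_ideal_fr_equiv p q h h' :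
  fr_equiv h h' -> in_ideal p q h' -> in_ideal p q h.
Proof.
move=> hh' [X [Y [F [rF Eh']]]]; exists X, Y, (F \+ (h \- h')).
split=> [|x]; first exact: finite_rankD.
by rewrite /= addrA -[_ + F x]Eh' addrC subrK.
Qed.

Lemma in_idealD p q g h : in_ideal p q g -> in_ideal p q h -> in_ideal p q (g \+ h).
Proof.
move=> [X [Y [F [rF Eg]]]] [X' [Y' [F' [rF' Eh]]]].
exists (X \+ X'), (Y \+ Y'), (F \+ F'); split=> [|x]; first exact: finite_rankD.
by rewrite /= Eg Eh /= !linearD addrACA (addrACA (iter p phi (X x))).
Qed.

Lemma in_ideal0l q h : in_ideal 0 q h.
Proof.
exists (h \- iter q psi), id, (fun _ => 0); split=> [|x]; first exact: finite_rank0.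
by rewrite /= addr0 subrK.
Qed.

Lemma in_ideal0r p h : in_ideal p 0 h.
Proof.
exists id, (h \- iter p phi), (fun _ => 0); split=> [|x]; first exact: finite_rank0.
by rewrite /= addr0 addrC subrK.
Qed.

Lemma finite_rank_in_ideal p q h : finite_rank (iter p phi) ->
  finite_rank (iter q psi) -> in_ideal p q h -> finite_rank h.
Proof.
move=> rphi rpsi [X [Y [F [rF Eh]]]]; apply: finite_rank_ext (fsym Eh).
have rXY := finite_rankD (finite_rank_compr X rphi) (finite_rank_compr Y rpsi).
exact: finite_rankD rXY rF.
Qed.

Section LinearCommutant.
Variable c : V -> V.
Hypothesis c_linear : linear c.
HB.instance Definition _ := GRing.isLinear.Build k V V *:%R c c_linear.

Lemma fr_commute_kalg a :
  fr_commute c phi -> fr_commute c psi -> kalg a -> fr_commute c a.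
Proof.
move=> c_phi c_psi; elim=> {a} [||| f g _ cf _ cg | d f _ cf | f g kf cf _ cg] //.
- exact: fr_equiv_refl.
- by apply: fr_equiv_ext (fr_equivD cf cg) _ _ => // x; rewrite /= linearD.
- by apply: fr_equiv_ext (fr_equivZ d cf) _ _ => // x; rewrite /= linearZ.
- apply: (fr_equiv_trans (g := f \o (c \o g))); first exact: (fr_equiv_compr g cf).
  exact: (fr_equiv_compl (kalg_linear kf) cg).
Qed.

Lemma in_ideal_comp p q p' q' cX cY h :
  fr_equiv (c \o iter p phi) (iter p' phi \o cX) ->
  fr_equiv (c \o iter q psi) (iter q' psi \o cY) ->
  in_ideal p q h -> in_ideal p' q' (c \o h).
Proof.
move=> c_phi c_psi [X [Y [F [rF Eh]]]].
apply: (@in_ideal_fr_equiv _ _ _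
  ((iter p' phi \o (cX \o X)) \+ (iter q' psi \o (cY \o Y)) \+ (c \o F))).
  have E := fr_equivD (fr_equiv_compr X c_phi) (fr_equiv_compr Y c_psi).
  have {}E := fr_equivD E (fr_equiv_refl (c \o F)).
  by apply: fr_equiv_ext E _ _ => // x; rewrite /= Eh /= !linearD.
by exists (cX \o X), (cY \o Y), (c \o F); split=> //; exact: finite_rank_compl.
Qed.

End LinearCommutant.

Hypothesis phi_psi_commute : fr_commute phi psi.

Lemma kalg_fr_commute a b : kalg a -> kalg b -> fr_commute a b.
Proof.
move=> ka kb.
have phi_b : fr_commute phi b.
  exact: (@fr_commute_kalg phi (linearP phi) b
    (fr_equiv_refl _) phi_psi_commute kb).
have psi_b : fr_commute psi b.
  exact: (@fr_commute_kalg psi (linearP psi) b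
    (fr_commute_sym phi_psi_commute) (fr_equiv_refl _) kb).
apply: fr_commute_sym.
exact: (@fr_commute_kalg b (kalg_linear kb) a
  (fr_commute_sym phi_b) (fr_commute_sym psi_b) ka).
Qed.

Lemma in_ideal_kalg_comp p q a h :
  kalg a -> in_ideal p q h -> in_ideal p q (a \o h).
Proof.
move=> ka; apply: (in_ideal_comp (kalg_linear ka)); apply: kalg_fr_commute ka _.
  exact: kalg_iter (kalg_phi _ _).
exact: kalg_iter (kalg_psi _ _).
Qed.

Lemma in_ideal_phi_comp p q h : in_ideal p q h -> in_ideal p.+1 q (phi \o h).
Proof.
apply: (@in_ideal_comp phi (linearP phi) _ _ _ _ id phi); first exact: fr_equiv_refl.
exact: kalg_fr_commute (kalg_phi _ _) (kalg_iter _ (kalg_psi _ _)).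
Qed.

Lemma in_ideal_psi_comp p q h : in_ideal p q h -> in_ideal p q.+1 (psi \o h).
Proof.
apply: (@in_ideal_comp psi (linearP psi) _ _ _ _ psi id); last exact: fr_equiv_refl.
exact: kalg_fr_commute (kalg_psi _ _) (kalg_iter _ (kalg_phi _ _)).
Qed.

Lemma in_ideal_gen_comp p q f h : gen_space phi psi f ->
  in_ideal p q.+1 h -> in_ideal p.+1 q h -> in_ideal p.+1 q.+1 (f \o h).
Proof.
case=> a [b [ka [kb ->]]] h_q h_p.
exact: in_idealD (in_ideal_phi_comp (in_ideal_kalg_comp ka h_q))
  (in_ideal_psi_comp (in_ideal_kalg_comp kb h_p)).
Qed.

Lemma in_ideal_prod fs :
  (forall i, (i < size fs)%N -> gen_space phi psi (nth id fs i)) ->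
  forall p q, (p + q <= (size fs).+1)%N ->
  in_ideal p q (foldr (fun f g => f \o g) id fs).
Proof.
elim: fs => [|f fs IHfs] gen_fs [|p] [|q] pq;
  try solve [exact: in_ideal0l | exact: in_ideal0r].
  by move: pq; rewrite addSn addnS.
have {}pq : (p + q <= size fs)%N by move: pq; rewrite addSn addnS.
apply: in_ideal_gen_comp; first exact: (gen_fs 0%N).
  by apply: IHfs => [i|]; [exact: (gen_fs i.+1) | rewrite addnS].
by apply: IHfs => [i|]; [exact: (gen_fs i.+1) | rewrite addSn].
Qed.

End GeneratedAlgebra.

Theorem lemma3p4 (k : fieldType) (V : lmodType k) (phi psi : {linear V -> V}) :
  finite_potent phi -> finite_potent psi ->
  finite_rank (fun x => phi (psi x) - psi (phi x)) ->
  finite_potent_space (gen_space phi psi).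
Proof.
move=> [n phi_n] [m psi_m] phi_psi_commute; exists (n + m)%N => fs size_fs gen_fs.
apply: finite_rank_in_ideal phi_n psi_m _.
by apply: (in_ideal_prod phi_psi_commute) => //; rewrite size_fs.
Qed.
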